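(* Let $p$ be an odd prime, $q\in\mathbb{C}_p$ with $|q-1|_p<1$, $\alpha\in\mathbb{N}\cup\{0\}$, $h\in\mathbb{N}$. For every integer $n\ge0$ and $x\in\mathbb{Z}_p$, \[ \widetilde{G}_{n+1,q^{-1}}^{(\alpha,h)}(1-x)=(-1)^n q^{h+\alpha n-1}\,\widetilde{G}_{n+1,q}^{(\alpha,h)}(x). \]
   Context: For $x\in\mathbb{Z}_p$ write $[x]_q=\frac{1-q^x}{1-q}$. For a uniformly differentiable $f:\mathbb{Z}_p\to\mathbb{C}_p$, the fermionic $p$-adic $q$-integral is $\int_{\mathbb{Z}_p}f(\xi)\,d\mu_{-q}(\xi)=\lim_{N\to\infty}\frac{1}{[p^N]_{-q}}\sum_{\xi=0}^{p^N-1}f(\xi)(-q)^{\xi}$, with $[p^N]_{-q}=\frac{1+q^{p^N}}{1+q}$. The $(h,q)$-Genocchi polynomials with weight $\alpha$ are defined for $n\ge0$, $x\in\mathbb{Z}_p$ by $\frac{\widetilde{G}_{n+1,q}^{(\alpha,h)}(x)}{n+1}=\int_{\mathbb{Z}_p}q^{(h-1)\xi}[x+\xi]_{q^{\alpha}}^n\,d\mu_{-q}(\xi)$. The objects with $q^{-1}$ are obtained by replacing $q$ by $q^{-1}$ everywhere, i.e. $\frac{\widetilde{G}_{n+1,q^{-1}}^{(\alpha,h)}(x)}{n+1}=\int_{\mathbb{Z}_p}q^{(1-h)\xi}[x+\xi]_{q^{-\alpha}}^n\,d\mu_{-q^{-1}}(\xi)$. *)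

From HB Require Import structures.
From mathcomp Require Import all_boot all_order all_algebra.
From mathcomp Require Import reals.
From Stdlib Require Import ClassicalEpsilon.
Set Implicit Arguments. Unset Strict Implicit. Unset Printing Implicit Defensive.
Import Order.TTheory GRing.Theory Num.Theory.
Local Open Scope ring_scope.

Section PAdic.
Variables (R : realType) (K : fieldType) (nK : K -> R).

Record is_nonarch_abs : Prop := {
  abs_ge0 : forall x, 0 <= nK x;
  abs_eq0 : forall x, nK x = 0 <-> x = 0;
  abs_mul : forall x y, nK (x * y) = nK x * nK y;
  abs_ultra : forall x y, nK (x + y) <= Num.max (nK x) (nK y) }.

Definition cvg_to (u : nat -> K) (l : K) : Prop :=
  forall e : R, 0 < e -> exists N, forall m, (N <= m)%N -> nK (u m - l) < e.

Definition cauchy (u : nat -> K) : Prop :=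
  forall e : R, 0 < e -> exists N, forall m k, (N <= m)%N -> (N <= k)%N ->
    nK (u m - u k) < e.

(* (K, nK) is a model of C_p: an algebraically closed field, complete for a
   non-archimedean absolute value whose restriction to the integers is the
   normalized p-adic absolute value |n|_p = p^(-v_p(n)). *)
Record Cp_like (p : nat) : Prop := {
  Cp_abs : is_nonarch_abs;
  Cp_closed : GRing.closed_field_axiom K;
  Cp_complete : forall u, cauchy u -> exists l, cvg_to u l;
  Cp_padic : forall n : nat, (0 < n)%N -> nK n%:R = (p%:R ^- logn p n) }.

(* Z_p, viewed inside K, is the closure of the natural numbers. *)
Definition in_Zp (x : K) : Prop :=
  forall e : R, 0 < e -> exists n : nat, nK (x - n%:R) < e.

(* the limit of a sequence (if it converges; 0 otherwise) *)
Definition limK (u : nat -> K) : K :=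
  epsilon (inhabits 0) (fun l => cvg_to u l).

(* q^x for x in Z_p: the value at x of the continuous extension of n |-> q^n *)
Definition qpow (q x : K) : K :=
  epsilon (inhabits 0) (fun l => forall e : R, 0 < e -> exists2 d : R, 0 < d &
    forall n : nat, nK (x - n%:R) < d -> nK (q ^+ n - l) < e).

Definition qnum (q x : K) : K :=
  if q == 1 then x else (1 - qpow q x) / (1 - q).

(* fermionic p-adic q-integral, f evaluated on the naturals xi = 0..p^N-1:
   lim_N 1/[p^N]_{-q} * sum_{xi < p^N} f(xi) (-q)^xi,
   with [p^N]_{-q} = (1 + q^(p^N)) / (1 + q) *)
Definition fint (p : nat) (q : K) (f : nat -> K) : K :=
  limK (fun N => ((1 + q) / (1 + q ^+ (p ^ N))) *
                 \sum_(xi < p ^ N) f xi * (- q) ^+ xi).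

(* (h,q)-Genocchi polynomial with weight alpha:
   G_{n+1,q}^{(alpha,h)}(x) = (n+1) * int q^{(h-1) xi} [x+xi]_{q^alpha}^n dmu_{-q} *)
Definition Gt (p : nat) (q : K) (alpha h n : nat) (x : K) : K :=
  n.+1%:R * fint p q (fun xi => q ^+ ((h - 1) * xi) *
                               (qnum (q ^+ alpha) (x + xi%:R)) ^+ n).

End PAdic.

From HB Require Import structures.
From mathcomp Require Import all_boot all_order all_algebra.
From mathcomp Require Import reals.
From mathcomp Require Import ring lra zify.
From Stdlib Require Import ClassicalEpsilon.
Set Implicit Arguments. Unset Strict Implicit. Unset Printing Implicit Defensive.
Import Order.TTheory GRing.Theory Num.Theory.
Local Open Scope ring_scope.

(* Both Genocchi values are limits of fermionic Riemann sums over xi < p^N.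
   Reindexing xi |-> p^N - 1 - xi turns the sum for q^-1 at 1 - x into
   (-1)^n q^(h + alpha n - 1) times the sum for q at x, up to two errors:
   [p^N - y]_(s^-1) differs from -s [y]_s by a multiple of [p^N]_(s^-1), and
   q^(p^N) differs from 1.  Both are bounded by c^N with c = max(|p|, |q - 1|),
   which is < 1: [p^N]_t is the product of the [p]_(t^(p^i)), i < N, each of
   norm at most c when |t - 1| <= |q - 1|.  The same estimate, after cutting
   the sum of level N+1 into p blocks of length p^N, shows that the Riemann
   sums are Cauchy; completeness gives the limits, which the fermionic
   integral picks by choice. *)

Lemma ler1Mn_expr (R : realDomainType) (d : R) N :
  0 <= d -> 1 + N%:R * d <= (1 + d) ^+ N.
Proof.
move=> d0; elim: N => [|N IH]; first by rewrite mul0r addr0 expr0.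
rewrite exprS -natr1 mulrDl mul1r.
have A1 : 1 <= (1 + d) ^+ N by apply: exprn_ege1; rewrite lerDl.
have : 0 <= d * ((1 + d) ^+ N - 1) by apply: mulr_ge0; rewrite ?subr_ge0.
nra.
Qed.

Lemma exprn_small_eventually (R : archiRealFieldType) (c e : R) :
  0 <= c -> c < 1 -> 0 < e -> exists N, forall M, (N <= M)%N -> c ^+ M < e.
Proof.
move=> c0 c1 e0; have [->|cn0] := eqVneq c 0.
  by exists 1%N => -[|M] // _; rewrite expr0n.
have cp : 0 < c by rewrite lt_neqAle eq_sym cn0.
set d := c^-1 - 1.
have d0 : 0 < d by rewrite subr_gt0 invf_gt1.
have ed0 : 0 < e * d by rewrite mulr_gt0.
set B := Num.bound ((e * d)^-1); exists B => M BM.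
have hB : (e * d)^-1 < M%:R.
  by apply: lt_le_trans (archi_boundP _) _; rewrite ?ler_nat // invr_ge0 ltW.
have Med : 1 < M%:R * (e * d) by rewrite -(ltr_pM2r ed0) mulVf ?gt_eqF in hB.
have cM : 0 < c^-1 ^+ M by rewrite exprn_gt0 // invr_gt0.
rewrite -[c]invrK exprVn -(ltr_pM2l cM) mulfV ?gt_eqF //.
have := ler1Mn_expr M (ltW d0); rewrite [1 + d]addrC subrK.
move: cM Med; set A := c^-1 ^+ M; set b := M%:R => *; nra.
Qed.

Lemma sum_ord_mul (V : nmodType) (F : nat -> V) P m :
  \sum_(k < P * m) F k = \sum_(j < m) \sum_(i < P) F (i + P * j)%N.
Proof.
elim: m => [|m IH]; first by rewrite muln0 !big_ord0.
rewrite mulnSr big_split_ord /= IH big_ord_recr /=; congr (_ + _).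
by apply: eq_bigr => i _; rewrite addnC.
Qed.

Lemma exprB_invr (F : fieldType) (z : F) a b : z != 0 -> (b <= a)%N ->
  z^-1 ^+ (a - b) = z^-1 ^+ a * z ^+ b.
Proof. by move=> z0 ba; rewrite exprB ?unitfE ?invr_eq0 // [z^-1 ^+ b]exprVn invrK. Qed.

Section NonArchimedean.
Variables (R : realType) (K : fieldType) (nK : K -> R).
Hypothesis habs : is_nonarch_abs nK.

Lemma nK_ge0 x : 0 <= nK x. Proof. exact: abs_ge0 habs x. Qed.
Lemma nK0 : nK 0 = 0. Proof. exact/(abs_eq0 habs). Qed.
Lemma nK_eq0 x : (nK x == 0) = (x == 0).
Proof. by apply/eqP/eqP => [/(abs_eq0 habs)|->] //; exact: nK0. Qed.
Lemma nKM x y : nK (x * y) = nK x * nK y. Proof. exact: abs_mul habs x y. Qed.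
Lemma nKD x y : nK (x + y) <= Num.max (nK x) (nK y). Proof. exact: abs_ultra habs x y. Qed.

Lemma nK1 : nK 1 = 1.
Proof.
have n10 : nK 1 != 0 by rewrite nK_eq0 oner_eq0.
by apply: (mulfI n10); rewrite -nKM !mulr1.
Qed.

Lemma nKN1 : nK (-1) = 1.
Proof.
apply/eqP; rewrite -(@eqrXn2 _ 2) ?nK_ge0 // expr1n expr2 -nKM.
by rewrite mulrNN mulr1 nK1.
Qed.

Lemma nKN x : nK (- x) = nK x. Proof. by rewrite -mulN1r nKM nKN1 mul1r. Qed.

Lemma nK_distC x y : nK (x - y) = nK (y - x). Proof. by rewrite -nKN opprB. Qed.

Lemma nKX x m : nK (x ^+ m) = nK x ^+ m.
Proof. by elim: m => [|m IH]; rewrite ?expr0 ?nK1 // !exprS nKM IH. Qed.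

Lemma nKV x : nK x^-1 = (nK x)^-1.
Proof.
have [->|x0] := eqVneq x 0; first by rewrite invr0 nK0 invr0.
have nx0 : nK x != 0 by rewrite nK_eq0.
by apply: (mulfI nx0); rewrite -nKM !mulfV // nK1.
Qed.

Lemma nKD_le x y M : nK x <= M -> nK y <= M -> nK (x + y) <= M.
Proof. by move=> hx hy; apply: le_trans (nKD x y) _; rewrite ge_max hx hy. Qed.

Lemma nKD_lt x y M : nK x < M -> nK y < M -> nK (x + y) < M.
Proof. by move=> hx hy; apply: le_lt_trans (nKD x y) _; rewrite gt_max hx hy. Qed.

Lemma nK_dist_trans_le x y z M :
  nK (x - y) <= M -> nK (y - z) <= M -> nK (x - z) <= M.
Proof. by move=> /nKD_le h /h; rewrite addrA subrK. Qed.

Lemma nK_dist_trans_lt x y z M :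
  nK (x - y) < M -> nK (y - z) < M -> nK (x - z) < M.
Proof. by move=> /nKD_lt h /h; rewrite addrA subrK. Qed.

Lemma nK_sum_le (I : Type) (r : seq I) (P : pred I) (F : I -> K) M :
  0 <= M -> (forall i, P i -> nK (F i) <= M) -> nK (\sum_(i <- r | P i) F i) <= M.
Proof.
move=> M0 hF; apply: (big_ind (fun y => nK y <= M)) => //; first by rewrite nK0.
by move=> a b; apply: nKD_le.
Qed.

Lemma nKD_eql a b : nK b < nK a -> nK (a + b) = nK a.
Proof.
move=> hab; apply/eqP; rewrite eq_le; apply/andP; split.
  by apply: le_trans (nKD a b) _; rewrite ge_max lexx ltW.
have := nKD (a + b) (- b); rewrite addrK nKN le_max => /orP[//|hba].
by move: (le_lt_trans hba hab); rewrite ltxx.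
Qed.

Lemma eq_nK_dist_small a b : (forall e : R, 0 < e -> nK (a - b) < e) -> a = b.
Proof.
move=> h; apply/eqP; rewrite -subr_eq0 -nK_eq0; apply/negPn/negP => hn.
have hpos : 0 < nK (a - b) by rewrite lt_neqAle eq_sym hn nK_ge0.
by move: (h _ hpos); rewrite ltxx.
Qed.

Lemma nK_near1 t : nK (t - 1) < 1 -> nK t = 1.
Proof. by move=> h; rewrite -[t](subrK 1) addrC nKD_eql nK1. Qed.

Lemma near1_neq0 t : nK (t - 1) < 1 -> t != 0.
Proof. by move=> h; rewrite -nK_eq0 nK_near1 // oner_eq0. Qed.

Lemma nK_invr_sub1 t : nK (t - 1) < 1 -> nK (t^-1 - 1) = nK (t - 1).
Proof.
move=> h; have -> : t^-1 - 1 = t^-1 * (1 - t).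
  by rewrite mulrBr mulr1 mulVf ?near1_neq0.
by rewrite nKM nKV nK_near1 // invr1 mul1r nK_distC.
Qed.

Lemma nK_subrX_le a b m :
  nK a <= 1 -> nK b <= 1 -> nK (a ^+ m - b ^+ m) <= nK (a - b).
Proof.
move=> ha hb; rewrite subrXX nKM ler_piMr ?nK_ge0 //.
apply: nK_sum_le => // i _; rewrite nKM !nKX.
by apply: mulr_ile1; rewrite ?exprn_ge0 ?nK_ge0 ?exprn_ile1 ?nK_ge0.
Qed.

Definition qnat (t : K) (m : nat) : K := \sum_(i < m) t ^+ i.

Lemma qnat1 m : qnat 1 m = m%:R.
Proof. by rewrite /qnat (eq_bigr (fun=> 1)) ?sumr_const ?card_ord // => i; rewrite expr1n. Qed.

Lemma qnat_sub1 t m : (t - 1) * qnat t m = t ^+ m - 1.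
Proof.
elim: m => [|m IH]; first by rewrite /qnat big_ord0 mulr0 expr0 subrr.
by rewrite /qnat big_ord_recr /= mulrDr IH exprS; ring.
Qed.

Lemma qnatE t m : t != 1 -> qnat t m = (1 - t ^+ m) / (1 - t).
Proof.
move=> t1; have t10 : 1 - t != 0 by rewrite subr_eq0 eq_sym.
by apply: (mulIf t10); rewrite divfK // mulrC -opprB mulNr qnat_sub1 opprB.
Qed.

Lemma qnatS t m : qnat t m.+1 = 1 + t * qnat t m.
Proof.
rewrite /qnat big_ord_recl expr0 mulr_sumr; congr (_ + _).
by apply: eq_bigr => i _; rewrite exprS.
Qed.

Lemma qnatM t a b : qnat t (a * b) = qnat t a * qnat (t ^+ a) b.
Proof.
elim: b => [|b IH]; first by rewrite muln0 /qnat !big_ord0 mulr0.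
rewrite mulnS qnatS /qnat big_split_ord /= -/(qnat t a).
have -> : \sum_(i < a * b) t ^+ (a + i) = t ^+ a * qnat t (a * b).
  by rewrite /qnat mulr_sumr; apply: eq_bigr => i _; rewrite exprD.
by rewrite IH -/(qnat (t ^+ a) b); ring.
Qed.

Lemma nK_qnat_le1 t m : nK (t - 1) < 1 -> nK (qnat t m) <= 1.
Proof. by move=> h; apply: nK_sum_le => // i _; rewrite nKX nK_near1 // expr1n. Qed.

Lemma nK_exprn_sub1_le t m : nK (t - 1) < 1 -> nK (t ^+ m - 1) <= nK (t - 1).
Proof. by move=> h; rewrite -qnat_sub1 nKM ler_piMr ?nK_ge0 ?nK_qnat_le1. Qed.

Lemma exprn_near1 t m : nK (t - 1) < 1 -> nK (t ^+ m - 1) < 1.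
Proof. by move=> h; apply: le_lt_trans (nK_exprn_sub1_le m h) h. Qed.

Lemma nK_qnatM_le t a b : nK (t - 1) < 1 -> nK (qnat t (a * b)) <= nK (qnat t a).
Proof. by move=> h; rewrite qnatM nKM ler_piMr ?nK_ge0 ?nK_qnat_le1 ?exprn_near1. Qed.

Lemma cvg_to_unique u l1 l2 : cvg_to nK u l1 -> cvg_to nK u l2 -> l1 = l2.
Proof.
move=> h1 h2; apply: eq_nK_dist_small => e e0.
have [N1 hN1] := h1 e e0; have [N2 hN2] := h2 e e0.
have a1 := hN1 _ (leq_maxl N1 N2); have a2 := hN2 _ (leq_maxr N1 N2).
by apply: nK_dist_trans_lt a2; rewrite nK_distC.
Qed.

Lemma limK_close_scale (A B : nat -> K) (c lB : K) : nK c <= 1 -> cvg_to nK B lB ->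
  (forall e : R, 0 < e -> exists N0, forall N, (N0 <= N)%N -> nK (A N - c * B N) < e) ->
  limK nK A = c * lB.
Proof.
move=> hc hB hAB.
have hA : cvg_to nK A (c * lB).
  move=> e e0; have [N1 hN1] := hAB e e0; have [N2 hN2] := hB e e0.
  exists (maxn N1 N2) => m; rewrite geq_max => /andP[m1 m2].
  have -> : A m - c * lB = (A m - c * B m) + c * (B m - lB) by ring.
  apply: nKD_lt; first exact: hN1.
  by rewrite nKM; apply: le_lt_trans (hN2 _ m2); rewrite ler_piMl ?nK_ge0.
apply/esym/(cvg_to_unique hA); rewrite /limK.
by apply: (epsilon_spec (inhabits 0) (cvg_to nK A)); exists (c * lB).
Qed.

Section Padic.
Variable p : nat.
Hypothesis hp : prime p.
Hypothesis hK : Cp_like nK p.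

Lemma nK_natr k : (0 < k)%N -> nK k%:R = nK p%:R ^+ logn p k.
Proof.
move=> k0; rewrite (Cp_padic hK k0) (Cp_padic hK (prime_gt0 hp)).
by rewrite (logn_prime _ hp) eqxx expr1 exprVn.
Qed.

Lemma nK_p_gt0 : 0 < nK p%:R.
Proof. by rewrite (Cp_padic hK (prime_gt0 hp)) invr_gt0 exprn_gt0 ?ltr0n ?prime_gt0. Qed.

Lemma nK_p_lt1 : nK p%:R < 1.
Proof.
rewrite (Cp_padic hK (prime_gt0 hp)) logn_prime // eqxx expr1.
by rewrite invf_lt1 ?ltr0n ?prime_gt0 // ltr1n prime_gt1.
Qed.

Lemma nK_p_exprn_le M N : (M <= N)%N -> nK p%:R ^+ N <= nK p%:R ^+ M.
Proof. by move=> MN; rewrite ler_wiXn2l ?nK_ge0 ?ltW ?nK_p_lt1. Qed.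

Lemma nK_natr_le1 k : nK k%:R <= 1.
Proof.
case: k => [|k]; first by rewrite nK0 ler01.
by rewrite nK_natr // exprn_ile1 ?nK_ge0 ?ltW ?nK_p_lt1.
Qed.

Lemma nK2 : odd p -> nK 2 = 1.
Proof.
move=> podd; rewrite -[2]/(2%:R) nK_natr // logn_prime //.
by case: eqP podd => [->|] //; rewrite expr0.
Qed.

Lemma dvdn_nK_natr_lt k N : nK k%:R < nK p%:R ^+ N -> (p ^ N %| k)%N.
Proof.
case: k => [|k] h; first by rewrite dvdn0.
rewrite pfactor_dvdn //; move: h; rewrite nK_natr //.
by rewrite ltr_iXn2l ?nK_p_gt0 ?nK_p_lt1 // => /ltnW.
Qed.

Lemma in_Zp_le1 y : in_Zp nK y -> nK y <= 1.
Proof.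
move=> hy; rewrite leNgt; apply/negP => y1.
have e0 : 0 < nK y - 1 by rewrite subr_gt0.
have [n hn] := hy _ e0.
have := nKD (y - n%:R) n%:R; rewrite subrK.
by have := nK_natr_le1 n; rewrite le_max => ? /orP[]; lra.
Qed.

Lemma in_Zp_addn y m : in_Zp nK y -> in_Zp nK (y + m%:R).
Proof.
move=> hy e e0; have [n hn] := hy e e0; exists (n + m)%N.
by rewrite natrD opprD addrACA subrr addr0.
Qed.

(* If n approximates y, then m + (p^K - n) approximates m - y: p^K is
   p-adically small, and K >= n keeps the natural subtraction exact. *)
Lemma in_Zp_natB y m : in_Zp nK y -> in_Zp nK (m%:R - y).
Proof.
move=> hy e e0; have [n hn] := hy e e0.
have [N hN] := exprn_small_eventually (nK_ge0 p%:R) nK_p_lt1 e0.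
have npn : (n <= p ^ (N + n))%N.
  by apply: leq_trans (ltnW (ltn_expl _ (prime_gt1 hp))); rewrite leq_addl.
exists (m + (p ^ (N + n) - n))%N.
have -> : m%:R - y - (m + (p ^ (N + n) - n))%:R = (n%:R - y) - (p ^ (N + n))%:R :> K.
  by rewrite natrD natrB //; ring.
by apply: nKD_lt; rewrite ?nKN ?natrX ?nKX ?hN ?leq_addr // nK_distC.
Qed.

Section Rate.
Variable b : R.
Hypothesis hb1 : b < 1.

Definition rate : R := Num.max (nK p%:R) b.

Lemma rate_ge0 : 0 <= rate. Proof. by rewrite le_max nK_ge0. Qed.
Lemma rate_lt1 : rate < 1. Proof. by rewrite gt_max hb1 nK_p_lt1. Qed.

Lemma rate_exprn_le M N : (M <= N)%N -> rate ^+ N <= rate ^+ M.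
Proof. by move=> MN; rewrite ler_wiXn2l ?rate_ge0 ?ltW ?rate_lt1. Qed.

(* [p]_u = p + sum_(i < p) (u^i - 1), and both summands have norm at most rate. *)
Lemma nK_qnat_p_le u : nK (u - 1) <= b -> nK (qnat u p) <= rate.
Proof.
move=> hu; have -> : qnat u p = p%:R + \sum_(i < p) (u ^+ i - 1).
  by rewrite sumrB sumr_const card_ord /qnat addrC subrK.
apply: nKD_le; first by rewrite le_max lexx.
apply: nK_sum_le => [|i _]; first exact: rate_ge0.
apply: le_trans (nK_exprn_sub1_le _ (le_lt_trans hu hb1)) _.
by apply: le_trans hu _; rewrite le_max lexx orbT.
Qed.

Variable t : K.
Hypothesis htb : nK (t - 1) <= b.
Let ht1 : nK (t - 1) < 1 := le_lt_trans htb hb1.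

Lemma nK_qnat_pX_le N : nK (qnat t (p ^ N)) <= rate ^+ N.
Proof.
elim: N => [|N IH]; first by rewrite expn0 /qnat big_ord1 nK1 expr0.
rewrite expnSr qnatM nKM exprSr ler_pM ?nK_ge0 // nK_qnat_p_le //.
exact: le_trans (nK_exprn_sub1_le _ ht1) htb.
Qed.

Lemma nK_exprn_sub1_pX_le a N : (p ^ N %| a)%N -> nK (t ^+ a - 1) <= rate ^+ N.
Proof.
move=> /dvdnP [m ->]; rewrite mulnC -qnat_sub1 nKM.
apply: le_trans (nK_qnat_pX_le N); apply: le_trans (nK_qnatM_le _ m ht1).
by rewrite ler_piMl ?nK_ge0 ?ltW.
Qed.

Lemma nK_exprn_dist_le n m N :
  nK (n%:R - m%:R) < nK p%:R ^+ N -> nK (t ^+ n - t ^+ m) <= rate ^+ N.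
Proof.
wlog mn : n m / (m <= n)%N.
  move=> W; case: (leqP m n) => [|/ltnW] nm; first exact: W.
  by rewrite nK_distC [nK (t ^+ n - _)]nK_distC; apply: W.
move=> h; rewrite -(subnK mn) exprD -{2}[t ^+ m]mul1r -mulrBl nKM.
rewrite nKX (nK_near1 ht1) expr1n mulr1; apply: nK_exprn_sub1_pX_le.
by apply: dvdn_nK_natr_lt; rewrite natrB.
Qed.

End Rate.

Definition is_qpow (t y l : K) : Prop := forall e : R, 0 < e -> exists2 d : R, 0 < d &
  forall n : nat, nK (y - n%:R) < d -> nK (t ^+ n - l) < e.

Section Qpow.
Variable t : K.
Hypothesis ht : nK (t - 1) < 1.
Let c := rate (nK (t - 1)).
Let c_ge0 : 0 <= c := rate_ge0 _.
Let c_lt1 : c < 1 := rate_lt1 ht.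

Lemma nK_exprn_near_le y n m N :
  nK (y - n%:R) < nK p%:R ^+ N -> nK (y - m%:R) < nK p%:R ^+ N ->
  nK (t ^+ n - t ^+ m) <= c ^+ N.
Proof.
move=> hn hm; apply: nK_exprn_dist_le => //.
have -> : n%:R - m%:R = (y - m%:R) - (y - n%:R) :> K by ring.
by apply: nKD_lt; rewrite ?nKN.
Qed.

Lemma is_qpow_exists y : in_Zp nK y -> exists l, is_qpow t y l.
Proof.
move=> hy.
have [u hu] : exists u : nat -> nat, forall k, nK (y - (u k)%:R) < nK p%:R ^+ k.
  apply: (choice (fun k n => nK (y - n%:R) < nK p%:R ^+ k)) => k.
  by apply: hy; rewrite exprn_gt0 ?nK_p_gt0.
have hu_le N k : (N <= k)%N -> nK (y - (u k)%:R) < nK p%:R ^+ N.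
  by move=> Nk; apply: lt_le_trans (hu k) (nK_p_exprn_le Nk).
have [l hl] : exists l, cvg_to nK (fun k => t ^+ u k) l.
  apply: (Cp_complete hK) => e e0.
  have [N hN] := exprn_small_eventually c_ge0 c_lt1 e0.
  exists N => m k Nm Nk; apply: le_lt_trans (hN N (leqnn N)).
  by apply: (nK_exprn_near_le (y := y)); apply: hu_le.
exists l => e e0; have [N hN] := exprn_small_eventually c_ge0 c_lt1 e0.
exists (nK p%:R ^+ N); first by rewrite exprn_gt0 ?nK_p_gt0.
move=> n hn; have [M hM] := hl e e0.
rewrite -(subrK (t ^+ u (maxn M N)) (t ^+ n)) -addrA; apply: nKD_lt.
  apply: le_lt_trans (hN N (leqnn N)).
  by apply: (nK_exprn_near_le hn); apply: hu_le; rewrite leq_maxr.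
exact: hM (leq_maxl M N).
Qed.

Lemma qpowP y : in_Zp nK y -> is_qpow t y (qpow nK t y).
Proof. by move=> hy; apply: (epsilon_spec (inhabits 0) (is_qpow t y)); exact: is_qpow_exists. Qed.

Lemma nK_qpow_sub1_le y : in_Zp nK y -> nK (qpow nK t y - 1) <= nK (t - 1).
Proof.
move=> hy; rewrite leNgt; apply/negP => hlt.
have e0 : 0 < nK (qpow nK t y - 1) by apply: le_lt_trans hlt; rewrite nK_ge0.
have [d d0 hd] := qpowP hy e0; have [n hn] := hy d d0.
have split : qpow nK t y - 1 = (qpow nK t y - t ^+ n) + (t ^+ n - 1).
  by rewrite addrA subrK.
have : nK (qpow nK t y - 1) < nK (qpow nK t y - 1).
  rewrite {1}split; apply: nKD_lt; first by rewrite nK_distC; apply: hd.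
  exact: le_lt_trans (nK_exprn_sub1_le n ht) hlt.
by rewrite ltxx.
Qed.

Lemma qpowDn y m : in_Zp nK y -> qpow nK t (y + m%:R) = t ^+ m * qpow nK t y.
Proof.
move=> hy; apply: eq_nK_dist_small => e e0.
have [d1 d10 hd1] := qpowP hy e0.
have [d2 d20 hd2] := qpowP (in_Zp_addn m hy) e0.
have d0 : 0 < Num.min d1 d2 by rewrite lt_min d10 d20.
have [n] := hy _ d0; rewrite lt_min => /andP[hn1 hn2].
rewrite -(subrK (t ^+ (n + m)) (qpow _ _ (_ + _))) -addrA; apply: nKD_lt.
  rewrite nK_distC; apply: hd2.
  by rewrite natrD opprD addrACA subrr addr0.
rewrite exprD mulrC -mulrBr nKM nKX nK_near1 // expr1n mul1r.
exact: hd1.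
Qed.
End Qpow.

Lemma qpow_natB_invr t y P : nK (t - 1) < 1 -> in_Zp nK y ->
  qpow nK t^-1 (P%:R - y) = t^-1 ^+ P * qpow nK t y.
Proof.
move=> ht hy; apply: eq_nK_dist_small => e e0.
have hti : nK (t^-1 - 1) < 1 by rewrite nK_invr_sub1.
have [d1 d10 hd1] := qpowP ht hy e0.
have [d2 d20 hd2] := qpowP hti (in_Zp_natB P hy) e0.
have d0 : 0 < Num.min d1 d2 by rewrite lt_min d10 d20.
have [n] := hy _ d0; rewrite lt_min => /andP[hn1 hn2].
have [N1 hN1] := exprn_small_eventually (nK_ge0 p%:R) nK_p_lt1 d20.
have [N2 hN2] := exprn_small_eventually (rate_ge0 (nK (t - 1))) (rate_lt1 ht) e0.
set L := (N1 + N2 + n)%N.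
have npL : (n <= p ^ L)%N.
  by apply: leq_trans (ltnW (ltn_expl _ (prime_gt1 hp))); rewrite leq_addl.
set k := (P + (p ^ L - n))%N.
have tk : t^-1 ^+ k = t^-1 ^+ P * (t^-1 ^+ (p ^ L) * t ^+ n).
  by rewrite exprD exprB_invr ?near1_neq0.
rewrite -(subrK (t^-1 ^+ k) (qpow _ _ (_ - _))) -addrA; apply: nKD_lt.
  rewrite nK_distC; apply: hd2.
  have -> : P%:R - y - k%:R = (n%:R - y) - (p ^ L)%:R :> K.
    by rewrite natrD natrB //; ring.
  apply: nKD_lt; first by rewrite nK_distC.
  by rewrite nKN natrX nKX; apply: hN1; rewrite /L -addnA leq_addr.
rewrite tk -mulrBr nKM nKX nK_near1 // expr1n mul1r.
have -> : t^-1 ^+ (p ^ L) * t ^+ n - qpow nK t y =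
    t ^+ n * (t^-1 ^+ (p ^ L) - 1) + (t ^+ n - qpow nK t y) by ring.
apply: nKD_lt; last exact: hd1.
rewrite nKM nKX nK_near1 // expr1n mul1r.
apply: le_lt_trans (hN2 L _); last by rewrite /L addnAC leq_addl.
by rewrite -(nK_invr_sub1 ht); apply: nK_exprn_sub1_pX_le.
Qed.

Section Qnum.
Variable s : K.
Hypothesis hs : nK (s - 1) < 1.

Lemma nK_qpow_le1 y : in_Zp nK y -> nK (qpow nK s y) <= 1.
Proof.
move=> hy; rewrite -(subrK 1 (qpow _ _ _)); apply: nKD_le; last by rewrite nK1.
exact: le_trans (nK_qpow_sub1_le hs hy) (ltW hs).
Qed.

Lemma nK_qnum_le1 y : in_Zp nK y -> nK (qnum nK s y) <= 1.
Proof.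
move=> hy; rewrite /qnum; case: eqP => [_|/eqP s1]; first exact: in_Zp_le1.
have hs1 : 0 < nK (1 - s) by rewrite lt_def nK_eq0 subr_eq0 eq_sym s1 nK_ge0.
rewrite nKM nKV ler_pdivrMr // mul1r nK_distC [nK (1 - s)]nK_distC.
exact: nK_qpow_sub1_le.
Qed.

Lemma nK_qnumDn_sub_le y m : in_Zp nK y ->
  nK (qnum nK s (y + m%:R) - qnum nK s y) <= nK (qnat s m).
Proof.
move=> hy; rewrite /qnum; case: eqP => [->|/eqP s1]; first by rewrite qnat1 addrC addKr.
have hs1 : 1 - s != 0 by rewrite subr_eq0 eq_sym.
rewrite qpowDn // (qnatE _ s1).
have -> : (1 - s ^+ m * qpow nK s y) / (1 - s) - (1 - qpow nK s y) / (1 - s)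
   = qpow nK s y * ((1 - s ^+ m) / (1 - s)) by field.
by rewrite nKM ler_piMl ?nK_ge0 ?nK_qpow_le1.
Qed.

Lemma nK_qnum_natB_invr_le y P : in_Zp nK y ->
  nK (qnum nK s^-1 (P%:R - y) + s * qnum nK s y) <= nK (qnat s^-1 P).
Proof.
move=> hy; rewrite /qnum; have [->|s1] := eqVneq s 1.
  by rewrite invr1 eqxx mul1r qnat1 subrK.
have si1 : s^-1 != 1 by apply: contra s1 => /eqP si1; rewrite -[s]invrK si1 invr1.
rewrite (negbTE si1) qpow_natB_invr // (qnatE _ si1).
have s0 : s != 0 := near1_neq0 hs.
have hs1 : 1 - s != 0 by rewrite subr_eq0 eq_sym.
have hsi1 : 1 - s^-1 != 0 by rewrite subr_eq0 eq_sym.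
have -> : (1 - s^-1 ^+ P * qpow nK s y) / (1 - s^-1) + s * ((1 - qpow nK s y) / (1 - s))
   = qpow nK s y * ((1 - s^-1 ^+ P) / (1 - s^-1)).
  by field; rewrite s0 hs1 subr_eq0 s1.
by rewrite nKM ler_piMl ?nK_ge0 ?nK_qpow_le1.
Qed.

End Qnum.

Definition fsum (q : K) (f : nat -> K) (N : nat) : K :=
  (1 + q) / (1 + q ^+ (p ^ N)) * \sum_(xi < p ^ N) f xi * (- q) ^+ xi.

Section FermionicSum.
Hypothesis hodd : odd p.
Variable q : K.
Hypothesis hq : nK (q - 1) < 1.
Let c := rate (nK (q - 1)).

(* 1 + v = 2 + (v - 1) with |2| = 1 > |v - 1|, as p is odd. *)
Lemma nK_1addr v : nK (v - 1) < 1 -> nK (1 + v) = 1.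
Proof.
move=> hv; have -> : 1 + v = 2 + (v - 1) by ring.
by rewrite nKD_eql (nK2 hodd).
Qed.

Lemma addr1_neq0 v : nK (v - 1) < 1 -> 1 + v != 0.
Proof. by move=> hv; rewrite -nK_eq0 nK_1addr // oner_eq0. Qed.

Lemma odd_pX N : odd (p ^ N). Proof. by rewrite oddX hodd orbT. Qed.

Lemma fsum_invr_reflect k g N :
  fsum q^-1 (fun xi => q^-1 ^+ (k * xi) * g xi) N =
  (1 + q) / (1 + q ^+ (p ^ N)) * q ^+ k * (q^-1 ^+ (p ^ N)) ^+ k *
  \sum_(i < p ^ N) q ^+ (k * i) * (- q) ^+ i * g (p ^ N - i.+1)%N.
Proof.
set P := (p ^ N)%N; have q0 : q != 0 := near1_neq0 hq.
have P0 : (0 < P)%N by rewrite expn_gt0 prime_gt0.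
have Pe : odd P by rewrite odd_pX.
have qP0 : 1 + q ^+ P != 0 by rewrite addr1_neq0 ?exprn_near1.
have invrP : q^-1 ^+ P.-1 = q * q^-1 ^+ P.
  by rewrite -[in RHS](prednK P0) exprS mulrA mulfV ?mul1r.
have pref : (1 + q^-1) / (1 + q^-1 ^+ P) * (q^-1 ^+ (k * P.-1) * q^-1 ^+ P.-1)
    = (1 + q) / (1 + q ^+ P) * q ^+ k * (q^-1 ^+ P) ^+ k.
  rewrite -subn1 mulnBr muln1 exprB_invr ?leq_pmulr // mulnC exprM subn1 invrP exprVn.
  by field; rewrite qP0 expf_neq0.
rewrite /fsum -/P (reindex_inj (@rev_ord_inj P)) /= -pref -[RHS]mulrA; congr (_ * _).
rewrite mulr_sumr; apply: eq_bigr => i _; have iP := ltn_ord i.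
have Pi : (P - i.+1 = P.-1 - i)%N by lia.
have iP1 : (i <= P.-1)%N by rewrite -ltnS prednK.
rewrite Pi mulnBr !exprB_invr ?leq_mul // -invrN exprB_invr ?oppr_eq0 // invrN.
have -> : (- q^-1) ^+ P.-1 = q^-1 ^+ P.-1.
  by rewrite exprNn -signr_odd -subn1 oddB ?Pe // mul1r.
ring.
Qed.

Variable f : nat -> K.
Hypothesis hf : forall N xi j, nK (f (xi + p ^ N * j)%N - f xi) <= c ^+ N.

(* Cut the sum of level N+1 into p blocks of length P = p^N; the block j
   carries the factor (-q)^(P j) = (-u)^j, and the factors sum to [p]_(-u). *)
Lemma nK_fsumS_sub_le N : nK (fsum q f N.+1 - fsum q f N) <= c ^+ N.
Proof.
set P := (p ^ N)%N; set u := q ^+ P.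
have hu : nK (u - 1) < 1 := exprn_near1 P hq.
have hup : nK (u ^+ p - 1) < 1 := exprn_near1 p hu.
have mqP : (- q) ^+ P = - u by rewrite exprNn -signr_odd odd_pX expr1 mulN1r.
set S := \sum_(xi < P) f xi * (- q) ^+ xi.
set E := \sum_(j < p) \sum_(i < P) (f (i + P * j)%N - f i) * (- q) ^+ i * (- u) ^+ j.
have blocks : \sum_(xi < p ^ N.+1) f xi * (- q) ^+ xi = S * qnat (- u) p + E.
  rewrite expnSr (sum_ord_mul (fun k => f k * (- q) ^+ k)) /S /E /qnat mulr_sumr -big_split /=.
  apply: eq_bigr => j _; rewrite mulr_suml -big_split /=.
  by apply: eq_bigr => i _; rewrite exprD exprM mqP; ring.
have qnat_p : qnat (- u) p * (1 + u) = 1 + u ^+ p.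
  have := qnat_sub1 (- u) p; rewrite exprNn -signr_odd hodd expr1 => h.
  by transitivity (- ((- u - 1) * qnat (- u) p)); [ring | rewrite h; ring].
have -> : fsum q f N.+1 - fsum q f N = (1 + q) / (1 + u ^+ p) * E.
  rewrite /fsum blocks expnSr exprM -/P -/u -/S -qnat_p.
  have qnat_p0 : qnat (- u) p != 0.
    by apply/eqP => q0; move: (addr1_neq0 hup); rewrite -qnat_p q0 mul0r eqxx.
  by field; rewrite addr1_neq0.
rewrite !nKM nKV !nK_1addr // invr1 !mul1r.
apply: nK_sum_le => [|j _]; first by rewrite exprn_ge0 ?rate_ge0.
apply: nK_sum_le => [|i _]; first by rewrite exprn_ge0 ?rate_ge0.
by rewrite !nKM !nKX !nKN (nK_near1 hq) (nK_near1 hu) !expr1n !mulr1 hf.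
Qed.

Lemma nK_fsum_sub_le N i : nK (fsum q f (N + i) - fsum q f N) <= c ^+ N.
Proof.
elim: i => [|i IH]; first by rewrite addn0 subrr nK0 exprn_ge0 ?rate_ge0.
apply: nK_dist_trans_le IH; rewrite addnS.
by apply: le_trans (nK_fsumS_sub_le _) _; rewrite rate_exprn_le ?leq_addr.
Qed.

Lemma fsum_cvg : cvg_to nK (fsum q f) (fint nK p q f).
Proof.
apply: (epsilon_spec (inhabits 0) (cvg_to nK (fsum q f))).
apply: (Cp_complete hK) => e e0.
have [N hN] := exprn_small_eventually (rate_ge0 _) (rate_lt1 hq) e0.
exists N => m k Nm Nk; apply: le_lt_trans (hN N (leqnn N)).
rewrite -(subnKC Nm) -(subnKC Nk); apply: nK_dist_trans_le (nK_fsum_sub_le _ _) _.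
by rewrite nK_distC nK_fsum_sub_le.
Qed.

End FermionicSum.

Definition genocchi_integrand (q : K) (alpha h n : nat) (x : K) (xi : nat) : K :=
  q ^+ ((h - 1) * xi) * qnum nK (q ^+ alpha) (x + xi%:R) ^+ n.

Lemma GtE q alpha h n x :
  Gt nK p q alpha h n x = n.+1%:R * fint nK p q (genocchi_integrand q alpha h n x).
Proof. by []. Qed.

Section Genocchi.
Variable q : K.
Hypothesis hq : nK (q - 1) < 1.
Variables (alpha h n : nat) (x : K).
Hypothesis hx : in_Zp nK x.
Let c := rate (nK (q - 1)).
Let s := q ^+ alpha.
Let hs : nK (s - 1) <= nK (q - 1) := nK_exprn_sub1_le alpha hq.
Let hs1 : nK (s - 1) < 1 := le_lt_trans hs hq.

Lemma nK_integrand_shift_le N xi j :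
  nK (genocchi_integrand q alpha h n x (xi + p ^ N * j)%N
      - genocchi_integrand q alpha h n x xi) <= c ^+ N.
Proof.
set P := (p ^ N)%N.
set Q1 := qnum nK s (x + (xi + P * j)%:R); set Q0 := qnum nK s (x + xi%:R).
have hx0 : in_Zp nK (x + xi%:R) by apply: in_Zp_addn.
have hQ1 : nK Q1 <= 1.
  by rewrite /Q1 natrD addrA; apply/nK_qnum_le1/in_Zp_addn.
have hQ0 : nK Q0 <= 1 by apply: nK_qnum_le1.
have -> : genocchi_integrand q alpha h n x (xi + P * j)%N - genocchi_integrand q alpha h n x xi
    = q ^+ ((h - 1) * xi) * (((q ^+ P) ^+ ((h - 1) * j) - 1) * Q1 ^+ n + (Q1 ^+ n - Q0 ^+ n)).
  rewrite /genocchi_integrand -/s -/Q1 -/Q0 mulnDr exprD mulnCA [q ^+ (P * _)]exprM; ring.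
rewrite nKM nKX nK_near1 // expr1n mul1r; apply: nKD_le.
  rewrite nKM nKX; apply: le_trans (_ : _ <= nK ((q ^+ P) ^+ ((h - 1) * j) - 1)) _.
    by rewrite ler_piMr ?nK_ge0 ?exprn_ile1 ?nK_ge0.
  apply: le_trans (nK_exprn_sub1_le _ (exprn_near1 P hq)) _.
  exact: nK_exprn_sub1_pX_le.
apply: le_trans (nK_subrX_le _ hQ1 hQ0) _.
rewrite /Q1 natrD addrA; apply: le_trans (nK_qnumDn_sub_le hs1 _ hx0) _.
by apply: le_trans (nK_qnatM_le _ _ hs1) _; apply: nK_qnat_pX_le.
Qed.

Hypothesis hodd : odd p.
Hypothesis hh : (0 < h)%N.

Lemma nK_qnum_reflect_le N i :
  nK (qnum nK s^-1 ((p ^ N)%:R - (x + i%:R)) ^+ n - (- s * qnum nK s (x + i%:R)) ^+ n)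
  <= c ^+ N.
Proof.
have hxi : in_Zp nK (x + i%:R) by apply: in_Zp_addn.
have hsi1 : nK (s^-1 - 1) < 1 by rewrite nK_invr_sub1.
apply: le_trans (nK_subrX_le _ _ _) _.
- exact/nK_qnum_le1/in_Zp_natB.
- by rewrite mulNr nKN nKM nK_near1 // mul1r nK_qnum_le1.
rewrite mulNr opprK; apply: le_trans (nK_qnum_natB_invr_le _ _ hxi) _ => //.
by apply: nK_qnat_pX_le; rewrite ?nK_invr_sub1.
Qed.

Lemma nK_fsum_reflect_le N :
  nK (fsum q^-1 (genocchi_integrand q^-1 alpha h n (1 - x)) N
      - (-1) ^+ n * q ^+ (h + alpha * n - 1) * fsum q (genocchi_integrand q alpha h n x) N)
  <= c ^+ N.
Proof.
set P := (p ^ N)%N; set k := (h - 1)%N; set u := q^-1 ^+ P.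
set F := (1 + q) / (1 + q ^+ P).
set Q := fun i : nat => qnum nK s (x + i%:R).
set Qr := fun i : nat => qnum nK s^-1 (P%:R - (x + i%:R)).
have c0E : (-1) ^+ n * q ^+ (h + alpha * n - 1) = q ^+ k * (- s) ^+ n.
  have -> : (h + alpha * n - 1 = k + alpha * n)%N by rewrite /k; lia.
  by rewrite exprD exprM /s [in RHS]exprNn; ring.
have -> : fsum q^-1 (genocchi_integrand q^-1 alpha h n (1 - x)) N
    - (-1) ^+ n * q ^+ (h + alpha * n - 1) * fsum q (genocchi_integrand q alpha h n x) N
  = F * q ^+ k * \sum_(i < P) q ^+ (k * i) * (- q) ^+ i *
      (u ^+ k * (Qr i ^+ n - (- s * Q i) ^+ n) + (u ^+ k - 1) * (- s * Q i) ^+ n).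
  rewrite /genocchi_integrand fsum_invr_reflect // c0E /fsum -/P -/u -/F.
  rewrite !mulr_sumr -sumrB; apply: eq_bigr => i _.
  have -> : 1 - x + (P - i.+1)%:R = P%:R - (x + i%:R).
    by rewrite natrB // -addn1 natrD; ring.
  by rewrite /Q /Qr exprVn -/s exprMn; ring.
have hu : nK (u - 1) < 1 by rewrite exprn_near1 ?nK_invr_sub1.
rewrite !nKM nKV !nK_1addr ?exprn_near1 // nKX nK_near1 // invr1 !expr1n !mul1r.
apply: nK_sum_le => [|i _]; first by rewrite exprn_ge0 ?rate_ge0.
rewrite !nKM !nKX nKN nK_near1 // !expr1n !mul1r; apply: nKD_le.
  by rewrite nKM nKX nK_near1 // expr1n mul1r nK_qnum_reflect_le.
have sQ1 : nK ((- s * Q i) ^+ n) <= 1.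
  rewrite nKX exprn_ile1 ?nK_ge0 // mulNr nKN nKM nK_near1 // mul1r.
  exact/nK_qnum_le1/in_Zp_addn.
rewrite nKM; apply: le_trans (ler_piMr (nK_ge0 _) sQ1) _.
apply: le_trans (nK_exprn_sub1_le _ hu) _.
by rewrite /u /c -(nK_invr_sub1 hq); apply: nK_exprn_sub1_pX_le; rewrite ?nK_invr_sub1.
Qed.

Lemma fint_genocchi_reflect :
  fint nK p q^-1 (genocchi_integrand q^-1 alpha h n (1 - x)) =
  (-1) ^+ n * q ^+ (h + alpha * n - 1) * fint nK p q (genocchi_integrand q alpha h n x).
Proof.
have cvgB := fsum_cvg hodd hq nK_integrand_shift_le.
apply: limK_close_scale cvgB _ => [|e e0].
  by rewrite nKM !nKX nKN nK1 nK_near1 // !expr1n mul1r.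
have [N hN] := exprn_small_eventually (rate_ge0 _) (rate_lt1 hq) e0.
exists N => M NM; exact: le_lt_trans (nK_fsum_reflect_le M) (hN M NM).
Qed.

End Genocchi.
End Padic.
End NonArchimedean.

Theorem mainTheorem2 (R : realType) (K : fieldType) (nK : K -> R) (p : nat)
  (hp : prime p) (hodd : odd p) (hK : Cp_like nK p)
  (q : K) (hq : nK (q - 1) < 1) (alpha h : nat) (hh : (0 < h)%N)
  (n : nat) (x : K) (hx : in_Zp nK x) :
  Gt nK p q^-1 alpha h n (1 - x) =
  (-1) ^+ n * q ^+ (h + alpha * n - 1) * Gt nK p q alpha h n x.
Proof.
by rewrite !(GtE nK) (fint_genocchi_reflect (Cp_abs hK) hp hK hq alpha n hx hodd hh); ring.
Qed.
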